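(* Let $(X,d,G)$ be a $G$-system and $\{F_n\}$ a tempered Følner sequence of $G$. Then the maps $\mu\mapsto\overline{\mathrm{mdim}}_M(\mu,\{F_n\},d)$ and $\mu\mapsto\underline{\mathrm{mdim}}_M(\mu,\{F_n\},d)$ from $M(X,G)$ to $[0,+\infty]$ are upper semi-continuous (with respect to the weak* topology).
   Context: $G$ is a countably infinite discrete amenable group; $(X,d,G)$ a compact metric space with continuous $G$-action by homeomorphisms. Følner: nonempty finite $F_n$ with $|gF_n\triangle F_n|/|F_n|\to0$; tempered: $|\bigcup_{j<n}F_j^{-1}F_n|\le C|F_n|$ for some $C>0$. $M(X,G)$: invariant Borel probability measures (weak* ); $E(X,G)$: ergodic ones; $\mathrm{co}(E(X,G))$: finite convex combinations, uniquely written $\mu=\sum_j\lambda_j\mu_j$ with distinct ergodic $\mu_j$, $\lambda_j>0$. For a finite Borel partition $\alpha$, $h_\nu(G,\alpha)=\lim_n\frac1{|F_n|}H_\nu(\bigvee_{g\in F_n}g^{-1}\alpha)$; for ergodic $\nu$, $h_\nu(\epsilon)=\inf\{h_\nu(G,\alpha):\mathrm{diam}(\alpha)\le\epsilon\}$; $F(\mu,\epsilon)=\sum_j\lambda_jh_{\mu_j}(\epsilon)$. $M_G(\mu)$: families $(\mu_\epsilon)_{\epsilon>0}\subset\mathrm{co}(E(X,G))$ with $\mu_\epsilon\to\mu$ weak* as $\epsilon\to0$. $\overline{\mathrm{mdim}}_M(\mu,\{F_n\},d)=\sup_{(\mu_\epsilon)\in M_G(\mu)}\limsup_{\epsilon\to0}F(\mu_\epsilon,\epsilon)/\log\frac1\epsilon$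 and $\underline{\mathrm{mdim}}_M(\mu,\{F_n\},d)$ is the same with $\liminf_{\epsilon\to0}$. (The paper allows equivalent choices of measure-theoretic $\epsilon$-entropy along $\{F_n\}$, e.g. upper Katok $\epsilon$-entropy, in place of $h_\nu(\epsilon)$.) *)

From HB Require Import structures.
From mathcomp Require Import all_boot all_order all_algebra.
From mathcomp Require Import monoid.
From mathcomp Require Import all_classical all_reals all_analysis.

Set Implicit Arguments.
Unset Strict Implicit.
Unset Printing Implicit Defensive.

Import Order.TTheory GRing.Theory Num.Theory.
Import numFieldNormedType.Exports.
Local Open Scope classical_set_scope.
Local Open Scope ring_scope.

(* A finite subset of G is encoded as a duplicate-free sequence.            *)

Section Group.
Variable G : groupType.

Definition gmul (g h : G) : G := monoid.mul g h.
Definition ginv (g : G) : G := monoid.inv g.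
Definition gone : G := monoid.one.

Definition ltrans (g : G) (F : seq G) : seq G := undup [seq gmul g x | x <- F].

Definition card_symdiff_trans (g : G) (F : seq G) : nat :=
  size ([seq x <- ltrans g F | x \notin F] ++ [seq x <- F | x \notin ltrans g F]).

Definition Folner (R : realType) (F : nat -> seq G) : Prop :=
  (forall n, uniq (F n)) /\ (forall n, F n != [::]) /\
  forall g : G,
    (fun n => ((card_symdiff_trans g (F n))%:R / (size (F n))%:R : R))
      @ \oo --> (0 : R).

Definition card_tempered_union (F : nat -> seq G) (n : nat) : nat :=
  size (undup (flatten
    [seq [seq gmul (ginv a) b | a <- F j, b <- F n] | j <- iota 0 n])).

Definition tempered (R : realType) (F : nat -> seq G) : Prop :=
  exists C : R, 0 < C /\
    forall n, ((card_tempered_union F n)%:R <= C * (size (F n))%:R).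

End Group.

Definition borel_type (X : ptopologicalType) := g_sigma_algebraType (@open X).

Definition is_metric_of (R : realType) (X : ptopologicalType)
    (d : X -> X -> R) : Prop :=
  [/\ forall x y, d x y = 0 <-> x = y,
      forall x y, d x y = d y x,
      forall x y z, d x z <= d x y + d y z &
      forall x : X, nbhs x = filter_from [set r : R | 0 < r]
                               (fun r => [set y | d x y < r])].

Definition G_system (R : realType) (G : groupType) (X : ptopologicalType)
    (d : X -> X -> R) (act : G -> X -> X) : Prop :=
  [/\ compact [set: X], is_metric_of d,
      forall x, act (gone G) x = x,
      forall g h x, act (gmul g h) x = act g (act h x) &
      forall g, continuous (act g)].

Section System.
Variables (R : realType) (G : groupType) (X : ptopologicalType).
Variables (d : X -> X -> R) (act : G -> X -> X).
Local Notation XB := (borel_type X).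
Local Notation prob := (probability XB R).

Definition invariant (mu : prob) : Prop :=
  forall (g : G) (A : set XB), measurable A -> mu (act g @^-1` A) = mu A.

Definition ergodic (mu : prob) : Prop :=
  invariant mu /\
  forall A : set XB, measurable A ->
    (forall g : G, act g @^-1` A = A) -> mu A = 0%E \/ mu A = 1%E.

Definition partition (alpha : seq (set XB)) : Prop :=
  [/\ forall i, (i < size alpha)%N -> measurable (nth set0 alpha i),
      forall i j, (i < size alpha)%N -> (j < size alpha)%N -> i <> j ->
         nth set0 alpha i `&` nth set0 alpha j = set0 &
      \bigcup_(i in [set i | (i < size alpha)%N]) nth set0 alpha i = setT].

Definition diam (A : set X) : \bar R :=
  ereal_sup [set (d p.1 p.2)%:E | p in A `*` A].

Definition partition_diam_le (alpha : seq (set XB)) (eps : R) : Prop :=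
  forall i, (i < size alpha)%N -> (diam (nth set0 alpha i) <= eps%:E)%E.

Definition xlnx (x : R) : R := if x == 0 then 0 else x * ln x.

(* H_nu( \bigvee_{g in F} g^{-1} alpha ); the atoms of the join are the
   \bigcap_{g in F} g^{-1} A_{c(g)} for c : F -> alpha *)
Definition H_join (nu : prob) (alpha : seq (set XB)) (F : seq G) : R :=
  - \sum_(c : {ffun 'I_(size F) -> 'I_(size alpha)})
      xlnx (fine (nu (\bigcap_(i in [set: 'I_(size F)])
                        (act (nth (gone G) F i) @^-1` nth set0 alpha (c i))))).

Definition h_part (F : nat -> seq G) (nu : prob) (alpha : seq (set XB)) : R :=
  limn (fun n => (size (F n))%:R^-1 * H_join nu alpha (F n)).

Definition h_eps (F : nat -> seq G) (nu : prob) (eps : R) : \bar R :=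
  ereal_inf [set (h_part F nu alpha)%:E |
               alpha in [set alpha | partition alpha /\
                                     partition_diam_le alpha eps]].

Definition ergodic_decomposition (mu : prob) (k : nat)
    (lambda : 'I_k -> R) (mus : 'I_k -> prob) : Prop :=
  [/\ forall j, 0 < lambda j,
      forall j, ergodic (mus j),
      forall i j, i <> j -> exists A : set XB, measurable A /\ mus i A <> mus j A &
      forall A : set XB, measurable A ->
        mu A = (\sum_(j < k) (lambda j)%:E * mus j A)%E].

Definition in_co_ergodic (mu : prob) : Prop :=
  exists k lambda mus, @ergodic_decomposition mu k lambda mus.

(* F(mu, eps) = \sum_j lambda_j h_{mu_j}(eps); the decomposition is unique,
   so the supremum below ranges over a single value (up to reindexing). *)
Definition Fmu (F : nat -> seq G) (mu : prob) (eps : R) : \bar R :=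
  ereal_sup [set s | exists k lambda mus,
     @ergodic_decomposition mu k lambda mus /\
     s = (\sum_(j < k) (lambda j)%:E * h_eps F (mus j) eps)%E].

Definition weak_star_cvg0 (mus : R -> prob) (mu : prob) : Prop :=
  forall f : X -> R, continuous f ->
    (fun eps => (\int[mus eps]_x (f x)%:E)%E) @ 0^'+ -->
      (\int[mu]_x (f x)%:E)%E.

Definition MG (mu : prob) : set (R -> prob) :=
  [set mus | (forall eps, 0 < eps -> in_co_ergodic (mus eps)) /\
             weak_star_cvg0 mus mu].

Definition limsup0 (u : R -> \bar R) : \bar R :=
  ereal_inf [set ereal_sup [set u e | e in [set e | 0 < e < delta]]
            | delta in [set delta : R | 0 < delta]].

Definition liminf0 (u : R -> \bar R) : \bar R :=
  ereal_sup [set ereal_inf [set u e | e in [set e | 0 < e < delta]]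
            | delta in [set delta : R | 0 < delta]].

Definition mdim_ratio (F : nat -> seq G) (mus : R -> prob) (eps : R) : \bar R :=
  (Fmu F (mus eps) eps * ((ln (1 / eps))^-1)%:E)%E.

Definition upper_mdim (F : nat -> seq G) (mu : prob) : \bar R :=
  ereal_sup [set limsup0 (mdim_ratio F mus) | mus in MG mu].

Definition lower_mdim (F : nat -> seq G) (mu : prob) : \bar R :=
  ereal_sup [set liminf0 (mdim_ratio F mus) | mus in MG mu].

(* upper semi-continuity on M(X,G) for the weak* topology: the sets
   { nu : |\int f_i dnu - \int f_i dmu| < delta, i < k } (f_i continuous)
   form a neighbourhood base of mu. *)
Definition weak_star_usc (Phi : prob -> \bar R) : Prop :=
  forall mu : prob, invariant mu ->
  forall c : \bar R, (Phi mu < c)%E ->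
  exists (k : nat) (f : 'I_k -> X -> R) (delta : R),
    (forall i, continuous (f i)) /\ 0 < delta /\
    forall nu : prob, invariant nu ->
      (forall i, (`| \int[nu]_x (f i x)%:E - \int[mu]_x (f i x)%:E | < delta%:E)%E) ->
      (Phi nu < c)%E.

End System.

From Pilot Require Import Defs.
From HB Require Import structures.
From mathcomp Require Import all_boot all_order all_algebra.
From mathcomp Require Import monoid.
From mathcomp Require Import all_classical all_reals all_analysis.
From mathcomp Require Import lra.

Set Implicit Arguments.
Unset Strict Implicit.
Unset Printing Implicit Defensive.
Import Order.TTheory GRing.Theory Num.Theory.
Import numFieldNormedType.Exports.
Local Open Scope classical_set_scope.
Local Open Scope ring_scope.

(* Both functionals have the form Phi mu = sup_{(mu_eps) in M_G(mu)} L(mu_eps),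
   where L is a limsup or liminf as eps -> 0 of a quantity H(mu_eps, eps).
   Suppose Phi nu_n >= c > r for invariant nu_n converging weak* to mu, and
   pick (m_n(eps)) in M_G(nu_n) with L > r.  Choose scales eps_n decreasing
   to 0 so fast that m_n(eps) is within 1/n of nu_n for eps <= eps_n, and
   such that H(m_n(eps_n), eps_n) > r (limsup), resp. H(m_n(eps), eps) > r
   for all eps <= eps_n (liminf).  Using m_n(eps) on (eps_{n+1}, eps_n]
   gives a family in M_G(mu) with L >= r, hence Phi mu >= r.
   Compactness of X supplies the sequence nu_n: the partitions of unity
   subordinate to finite (1/n)-nets give a countable family of test functions
   whose integrals control the integral of every continuous function. *)

Section Stages.
Variable R : realType.

Definition decreasing_to0 (eps : nat -> R) : Prop :=
  [/\ forall n, 0 < eps n, forall n, eps n.+1 < eps n &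
      forall e, 0 < e -> exists n, eps n < e].

(* For [e > eps 0] there is no stage and [xget] returns the junk value 0. *)
Definition stage (eps : nat -> R) (e : R) : nat :=
  xget 0%N [set n | eps n.+1 < e <= eps n].

Definition paste (T : Type) (eps : nat -> R) (m : nat -> R -> T) : R -> T :=
  fun e => m (stage eps e) e.

Definition pastable (T : Type) (L : (R -> T) -> \bar R) : Prop :=
  forall (r : R) (m : nat -> R -> T), (forall n, r%:E < L (m n))%E ->
  forall bound : nat -> R, (forall n, 0 < bound n) ->
  exists eps, [/\ decreasing_to0 eps, forall n, eps n < bound n &
                  (r%:E <= L (paste eps m))%E].

Variable eps : nat -> R.
Hypothesis eps_to0 : decreasing_to0 eps.

Lemma le_decreasing_to0 m n : (m <= n)%N -> eps n <= eps m.
Proof.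
case: eps_to0 => _ eps_decr _.
apply: (homo_leq (r := fun x y => y <= x)) => [x|y x z xy yz|i].
- exact: lexx.
- exact: le_trans yz xy.
- exact/ltW/eps_decr.
Qed.

Lemma stage_eq n e : eps n.+1 < e <= eps n -> stage eps e = n.
Proof.
move=> /andP[lt_n le_n]; rewrite /stage.
case: xgetP => [k _ /andP[lt_k le_k]|]; last by move/(_ n); rewrite /= lt_n le_n.
case: (ltngtP k n) => // [lt_kn|lt_nk].
- by have := le_decreasing_to0 lt_kn; rewrite leNgt (lt_le_trans lt_k le_n).
- by have := le_decreasing_to0 lt_nk; rewrite leNgt (lt_le_trans lt_n le_k).
Qed.

Lemma stage_spec e : 0 < e <= eps 0 ->
  eps (stage eps e).+1 < e <= eps (stage eps e).
Proof.
move=> /andP[e_gt0 e_le0].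
suff [n n_e] : exists n, eps n.+1 < e <= eps n by rewrite (stage_eq n_e).
have [_ _ /(_ e e_gt0) ex_lt] := eps_to0.
have [[|k] lt_k min_k] := ex_minnP ex_lt.
  by move: lt_k; rewrite ltNge e_le0.
exists k; rewrite lt_k leNgt /=; apply/negP => /min_k.
by rewrite ltnn.
Qed.

Lemma stage_ge n e : 0 < e <= eps n -> (n <= stage eps e)%N.
Proof.
move=> /andP[e_gt0 e_le].
have e_le0 : e <= eps 0 by apply: le_trans e_le (le_decreasing_to0 (leq0n n)).
have /andP[lt_stage _] := stage_spec (introT andP (conj e_gt0 e_le0)).
rewrite leqNgt; apply/negP => /le_decreasing_to0.
by rewrite leNgt (lt_le_trans lt_stage e_le).
Qed.

End Stages.

Section DecreasingChoice.
Variable R : realType.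

Definition mesh (n : nat) : R := n.+1%:R^-1.

Lemma mesh_gt0 n : 0 < mesh n.
Proof. by rewrite invr_gt0 ltr0n. Qed.

Lemma mesh_le m n : (m <= n)%N -> mesh n <= mesh m.
Proof. by move=> le_mn; rewrite lef_pV2 ?posrE ?ltr0n // ler_nat. Qed.

Lemma exists_mesh_lt e : 0 < e -> exists n, mesh n < e.
Proof. by move=> /ltr_add_invr[n]; rewrite add0r; exists n. Qed.

Fixpoint descend (pick : nat * R -> R) (bound : nat -> R) (n : nat) : R :=
  pick (n, Num.min (Num.min (bound n) (mesh n))
                   (if n is k.+1 then descend pick bound k else 1)).

Lemma exists_decreasing_to0 (Q : nat -> R -> Prop) (bound : nat -> R) :
  (forall n, 0 < bound n) ->
  (forall n r, 0 < r -> exists2 e, 0 < e < r & Q n e) ->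
  exists eps, [/\ decreasing_to0 eps, forall n, eps n < bound n &
                  forall n, Q n (eps n)].
Proof.
move=> bound_gt0 Q_small.
have /choice[pick pickP] : forall nr : nat * R,
    exists e, 0 < nr.2 -> 0 < e < nr.2 /\ Q nr.1 e.
  move=> [n r]; case: (boolP (0 < r)) => [/(Q_small n)[e e_in Qe]|r_le0].
    by exists e.
  by exists 0.
pose eps := descend pick bound.
pose ceil n := Num.min (Num.min (bound n) (mesh n)) (if n is k.+1 then eps k else 1).
have epsE n : eps n = pick (n, ceil n) by case: n.
have ceil_gt0 n : 0 < ceil n.
  elim: n => [|n IH]; rewrite /ceil !lt_min bound_gt0 mesh_gt0 //=.
  by rewrite epsE; have [/andP[]] := pickP (n, ceil n) IH.
have eps_ceil n : 0 < eps n < ceil n /\ Q n (eps n).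
  by rewrite epsE; exact: (pickP (n, ceil n) (ceil_gt0 n)).
have ceil_le n : ceil n <= Num.min (bound n) (mesh n) by rewrite ge_min lexx.
exists eps; split.
- split=> [n|n|e e_gt0].
  + by have [/andP[]] := eps_ceil n.
  + have [/andP[_ lt_ceil] _] := eps_ceil n.+1.
    by apply: lt_le_trans lt_ceil _; rewrite ge_min lexx orbT.
  + have [n mesh_lt] := exists_mesh_lt e_gt0; exists n.
    have [/andP[_ lt_ceil] _] := eps_ceil n.
    apply: lt_trans mesh_lt; apply: lt_le_trans lt_ceil (le_trans (ceil_le n) _).
    by rewrite ge_min lexx orbT.
- move=> n; have [/andP[_ lt_ceil] _] := eps_ceil n.
  by apply: lt_le_trans lt_ceil (le_trans (ceil_le n) _); rewrite ge_min lexx.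
- by move=> n; have [] := eps_ceil n.
Qed.

Lemma pastable_limsup0 (T : Type) (H : T -> R -> \bar R) :
  pastable (fun mus : R -> T => limsup0 (fun e => H (mus e) e)).
Proof.
move=> r m r_lt bound bound_gt0.
have small n dd : 0 < dd -> exists2 e, 0 < e < dd & (r%:E < H (m n e) e)%E.
  move=> dd_gt0.
  have : (limsup0 (fun e => H (m n e) e) <=
          ereal_sup [set H (m n e) e | e in [set e | (0 < e < dd)%R]])%E.
    by apply: ereal_inf_lbound; exists dd.
  move=> /(lt_le_trans (r_lt n)) /ereal_sup_gt[_ [e e_in <-] r_lt_e].
  by exists e.
have [eps [eps_to0 eps_bound eps_r]] := exists_decreasing_to0 bound_gt0 small.
exists eps; split => //.
have [eps_gt0 eps_decr eps_small] := eps_to0.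
apply/ereal_infP => _ [dd dd_gt0 <-].
have [n eps_lt] := eps_small dd dd_gt0.
apply: le_trans (ltW (eps_r n)) _; apply: ereal_sup_ubound; exists (eps n).
  by rewrite /= eps_gt0.
by rewrite /paste (@stage_eq _ _ eps_to0 n) // eps_decr lexx.
Qed.

Lemma pastable_liminf0 (T : Type) (H : T -> R -> \bar R) :
  pastable (fun mus : R -> T => liminf0 (fun e => H (mus e) e)).
Proof.
move=> r m r_lt bound bound_gt0.
have small n dd : 0 < dd -> exists2 e, 0 < e < dd &
    forall e', 0 < e' <= e -> (r%:E < H (m n e') e')%E.
  move=> dd_gt0; have [_ [dn /= dn_gt0 <-] r_lt_inf] := ereal_sup_gt (r_lt n).
  exists (Num.min dd dn / 2).
    have : 0 < Num.min dd dn <= dd by rewrite lt_min dd_gt0 dn_gt0 ge_min lexx.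
    by move: (Num.min dd dn) => t /andP[t_gt0 t_le]; apply/andP; split; lra.
  move=> e' /andP[e'_gt0 e'_le]; apply: lt_le_trans r_lt_inf _.
  apply: ereal_inf_lbound; exists e' => //; rewrite /= e'_gt0 /=.
  have : 0 < Num.min dd dn <= dn by rewrite lt_min dd_gt0 dn_gt0 ge_min lexx orbT.
  by move: (Num.min dd dn) e'_le => t t_e' /andP[t_gt0 t_le]; lra.
have [eps [eps_to0 eps_bound eps_r]] := exists_decreasing_to0 bound_gt0 small.
exists eps; split => //.
have [eps_gt0 _ _] := eps_to0.
have r_le_inf : (r%:E <= ereal_inf
    [set H (paste eps m e) e | e in [set e | (0 < e < eps 0%N)%R]])%E.
  apply/ereal_infP => _ [e /andP[e_gt0 e_lt] <-].
  have /andP[_ e_le] := stage_spec eps_to0 (introT andP (conj e_gt0 (ltW e_lt))).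
  by apply/ltW/eps_r; rewrite e_gt0.
apply: le_trans r_le_inf (ereal_sup_ubound _).
by exists (eps 0%N); first exact: eps_gt0.
Qed.

End DecreasingChoice.

Arguments mesh {R}.

Lemma continuous_sum (R : realType) (T : topologicalType) (I : Type)
    (s : seq I) (g : I -> T -> R) :
  (forall i, continuous (g i)) -> continuous (fun x => \sum_(i <- s) g i x).
Proof.
move=> g_cont; elim: s => [|i s IH] x.
  by under eq_fun do rewrite big_nil; exact: cvg_cst.
by under eq_fun do rewrite big_cons; apply: cvgD; [exact: g_cont | exact: IH].
Qed.

Lemma continuousMl (R : realType) (T : topologicalType) (c : R) (g : T -> R) :
  continuous g -> continuous (fun x => c * g x).
Proof. by move=> g_cont x; apply: cvgM; [exact: cvg_cst | exact: g_cont]. Qed.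

Lemma continuous_measurable (R : realType) (X : ptopologicalType) (f : X -> R) :
  continuous f -> measurable_fun (setT : set (borel_type X)) f.
Proof.
move=> f_cont.
apply: (@measurability _ _ _ _ _ _ (measurable_realfun.RGenOpens.G (R := R))).
  exact: measurable_realfun.RGenOpens.measurableE.
move=> _ [_ [x [y ->]] <-]; apply: sub_sigma_algebra.
by rewrite setTI; apply: open_comp; [move=> z _; exact: f_cont | exact: itv_open].
Qed.

Lemma lte_EFin_between (R : realType) (a c : \bar R) :
  (a < c)%E -> exists r : R, (a < r%:E)%E /\ (r%:E < c)%E.
Proof.
case: a => [x| |]; case: c => [y| |] //=.
- by rewrite lte_fin => lt_xy; exists ((x + y) / 2); rewrite !lte_fin; split; lra.
- by move=> _; exists (x + 1); rewrite lte_fin ltry; split => //; lra.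
- by move=> _; exists (y - 1); rewrite lte_fin ltNyr; split => //; lra.
- by move=> _; exists 0; rewrite ltNyr ltry.
Qed.

Section CompactMetricSpace.
Variables (R : realType) (X : ptopologicalType) (d : X -> X -> R).
Hypothesis d_metric : is_metric_of d.

Lemma metric_refl x : d x x = 0.
Proof. by case: d_metric => d0 _ _ _; apply/d0. Qed.

Lemma metricC x y : d x y = d y x.
Proof. by case: d_metric. Qed.

Lemma metric_triangle x y z : d x z <= d x y + d y z.
Proof. by case: d_metric. Qed.

Lemma nbhs_metric_ball x r : 0 < r -> nbhs x [set y | d x y < r].
Proof. by case: d_metric => _ _ _ -> r_gt0; exists r. Qed.

Lemma nbhs_metricP x A : nbhs x A ->
  exists2 r, 0 < r & [set y | d x y < r] `<=` A.
Proof. by case: d_metric => _ _ _ -> [r r_gt0 rA]; exists r. Qed.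

Lemma open_metric_ball x r : open [set y | d x y < r].
Proof.
rewrite openE => y /= dxy_lt.
have r_gt0 : 0 < r - d x y by rewrite subr_gt0.
apply: filterS (nbhs_metric_ball y r_gt0) => z /= dyz_lt.
by apply: le_lt_trans (metric_triangle x y z) _; rewrite -ltrBrDl.
Qed.

Lemma continuous_metric p : continuous (d p).
Proof.
move=> x; apply/cvgrPdist_lt => e e_gt0.
apply: filterS (nbhs_metric_ball x e_gt0) => y /= dxy_lt.
have := metric_triangle p x y; have := metric_triangle p y x.
rewrite (metricC y x) ltr_distlC => *; apply/andP; split; lra.
Qed.

Hypothesis X_compact : compact [set: X].

Lemma finite_ball_cover (r : X -> R) : (forall x, 0 < r x) ->
  exists s : seq X, forall x, exists2 p, p \in s & d p x < r p.
Proof.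
move=> r_gt0; move: X_compact; rewrite compact_cover.
case/(_ X setT (fun p => [set y | d p y < r p])) => [p _|x _|D _ D_cover].
- exact: open_metric_ball.
- by exists x => //=; rewrite metric_refl.
exists (finmap.enum_fset D) => x.
by have [p /= Dp px] := D_cover x I; exists p.
Qed.

Lemma finite_net r : 0 < r ->
  exists s : seq X, forall x, exists2 p, p \in s & d p x < r.
Proof. by move=> r_gt0; apply: (@finite_ball_cover (fun=> r)). Qed.

(* Lebesgue-number argument: [f] oscillates by less than [e / 2] on the ball
   of radius [2 r p] around [p], and finitely many balls of radius [r p]
   cover [X]. *)
Lemma uniform_continuous (f : X -> R) : continuous f -> forall e, 0 < e ->
  exists2 rho, 0 < rho & forall x y, d x y < rho -> `|f x - f y| < e.
Proof.
move=> f_cont e e_gt0.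
have /choice[r rP] : forall x, exists r, 0 < r /\
    forall y, d x y < r + r -> `|f x - f y| < e / 2.
  move=> x; have e2_gt0 : 0 < e / 2 by rewrite divr_gt0.
  have /cvgrPdist_lt/(_ _ e2_gt0)/nbhs_metricP[r r_gt0 rf] := f_cont x.
  exists (r / 2); split; first by rewrite divr_gt0.
  by move=> y; rewrite -splitr => /rf.
have r_gt0 x : 0 < r x by case: (rP x).
have [s s_cover] := finite_ball_cover r_gt0.
exists (\big[Num.min/1]_(p <- s) r p).
  by elim: s {s_cover} => [|p s IH]; rewrite ?big_nil ?big_cons ?lt_min ?r_gt0.
move=> x y dxy_lt; have [p ps dpx_lt] := s_cover x.
have rp_ge : \big[Num.min/1]_(q <- s) r q <= r p.
  elim: s ps {s_cover dxy_lt} => // q s IH; rewrite inE big_cons ge_min.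
  by case/orP=> [/eqP<-|/IH->]; rewrite ?lexx ?orbT.
have dpy_lt : d p y < r p + r p.
  apply: le_lt_trans (metric_triangle p x y) _.
  by apply: ltrD dpx_lt (lt_le_trans dxy_lt rp_ge).
have dpx_lt2 : d p x < r p + r p by apply: lt_le_trans dpx_lt _; rewrite lerDl ltW.
rewrite (splitr e); apply: le_lt_trans (ler_distD (f p) _ _) _.
by rewrite distrC; apply: ltrD; apply: (proj2 (rP p)).
Qed.

Lemma continuous_bounded (f : X -> R) : continuous f ->
  exists B, forall x, `|f x| <= B.
Proof.
move=> f_cont; have [rho rho_gt0 f_unif] := uniform_continuous f_cont ltr01.
have [s s_net] := finite_net rho_gt0.
exists (\sum_(p <- s) `|f p| + 1) => x; have [p ps dpx_lt] := s_net x.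
have fp_le : `|f p| <= \sum_(q <- s) `|f q|.
  by rewrite (big_rem p ps) /= lerDl sumr_ge0.
have := f_unif p x dpx_lt; rewrite distrC => /ltW fxp_le.
have := ler_distD (f p) (f x) 0; rewrite !subr0 => fx_le.
by apply: le_trans fx_le _; lra.
Qed.

Local Notation prob := (probability (borel_type X) R).

Lemma continuous_integrable (P : prob) (f : X -> R) : continuous f ->
  P.-integrable setT (EFin \o f).
Proof.
move=> f_cont; apply: measurable_bounded_integrable => //.
- by apply: le_lt_trans (probability_le1 P measurableT) _; rewrite ltry.
- exact: continuous_measurable.
have [B f_le] := continuous_bounded f_cont.
exists B; split; first exact: num_real.
by move=> M B_lt x _; apply: le_trans (f_le x) (ltW B_lt).
Qed.

Lemma integral_continuousE (P : prob) (f : X -> R) : continuous f ->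
  (\int[P]_x (f x)%:E)%E = (\int[P]_x f x)%:E.
Proof.
move=> f_cont; rewrite fineK //.
exact: integrable_fin_num (continuous_integrable P f_cont).
Qed.

Lemma integral_distE (P Q : prob) (f : X -> R) : continuous f ->
  `|\int[P]_x (f x)%:E - \int[Q]_x (f x)%:E|%E
  = (`|\int[P]_x f x - \int[Q]_x f x|)%:E.
Proof. by move=> f_cont; rewrite !integral_continuousE. Qed.

Lemma Rintegral_sum (P : prob) (I : Type) (s : seq I) (c : I -> R)
    (g : I -> X -> R) : (forall i, continuous (g i)) ->
  \int[P]_x (\sum_(i <- s) c i * g i x) = \sum_(i <- s) c i * \int[P]_x g i x.
Proof.
move=> g_cont.
have cg_cont s' : continuous (fun x => \sum_(i <- s') c i * g i x).
  by apply: continuous_sum => i; exact/continuousMl/g_cont.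
elim: s => [|i s IH].
  by under eq_fun do rewrite big_nil; rewrite big_nil Rintegral_cst // mul0r.
under eq_fun do rewrite big_cons.
rewrite RintegralD ?continuous_integrable //; last exact/continuousMl/g_cont.
by rewrite RintegralZl ?IH ?big_cons ?continuous_integrable.
Qed.

Lemma normr_Rintegral_le (P : prob) (f : X -> R) (B : R) : continuous f ->
  (forall x, `|f x| <= B) -> `|\int[P]_x f x| <= B.
Proof.
move=> f_cont f_le.
apply: le_trans (le_normr_Rintegral _ _) _ => //; first exact: continuous_integrable.
have -> : B = \int[P]_x B by rewrite Rintegral_cst //= probability_setT mulr1.
apply: le_Rintegral => //; apply: continuous_integrable => //.
  by move=> x; apply: continuous_comp; [exact: f_cont | exact: norm_continuous].
by move=> x; exact: cvg_cst.
Qed.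

Definition net (n : nat) : seq X := projT1 (cid (finite_net (mesh_gt0 R n))).

Lemma netP n x : exists2 p, p \in net n & d p x < mesh n.
Proof. exact: (projT2 (cid (finite_net (mesh_gt0 R n))) x). Qed.

Definition node (n : nat) (j : nat) : X := nth point (net n) j.

Definition bump (n : nat) (p x : X) : R := Num.max 0 (2 * mesh n - d p x).

Definition bump_sum (n : nat) (x : X) : R :=
  \sum_(j < size (net n)) bump n (node n j) x.

Definition unity (n : nat) (j : 'I_(size (net n))) (x : X) : R :=
  bump n (node n j) x / bump_sum n x.
Arguments unity : clear implicits.

Lemma bump_ge0 n p x : 0 <= bump n p x.
Proof. by rewrite /bump le_max lexx. Qed.

Lemma continuous_bump n p : continuous (bump n p).
Proof.
move=> x; apply: (@continuous_max _ _ (fun=> 0) (fun y => 2 * mesh n - d p y)).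
  exact: cvg_cst.
by apply: cvgB; [exact: cvg_cst | exact: continuous_metric].
Qed.

Lemma mesh_le_bump_sum n x : mesh n <= bump_sum n x.
Proof.
have [p p_net dpx_lt] := netP n x.
have j_lt : (index p (net n) < size (net n))%N by rewrite index_mem.
rewrite /bump_sum (bigD1 (Ordinal j_lt)) //= /node nth_index //.
have mesh_le : mesh n <= bump n p x.
  by rewrite /bump le_max; apply/orP; right; have := mesh_gt0 R n; lra.
by apply: le_trans mesh_le _; rewrite lerDl sumr_ge0 // => j _; exact: bump_ge0.
Qed.

Lemma bump_sum_gt0 n x : 0 < bump_sum n x.
Proof. exact: lt_le_trans (mesh_gt0 R n) (mesh_le_bump_sum n x). Qed.

Lemma continuous_unity n j : continuous (unity n j).
Proof.
move=> x; apply: continuousM; first exact: continuous_bump.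
apply: continuousV; first by rewrite gt_eqF // bump_sum_gt0.
by apply: continuous_sum => i; exact: continuous_bump.
Qed.

Lemma unity_ge0 n j x : 0 <= unity n j x.
Proof. by rewrite divr_ge0 ?bump_ge0 // ltW // bump_sum_gt0. Qed.

Lemma sum_unity n x : \sum_(j < size (net n)) unity n j x = 1.
Proof. by rewrite -mulr_suml divff // gt_eqF // bump_sum_gt0. Qed.

Lemma unity_gt0_near n j x : 0 < unity n j x -> d (node n j) x < 2 * mesh n.
Proof.
rewrite pmulr_lgt0 ?invr_gt0 ?bump_sum_gt0 // /bump lt_max ltxx /=.
by rewrite subr_gt0.
Qed.

(* [unity n j x] vanishes unless [d (node n j) x < 2 * mesh n], so the error
   is an average of oscillations of [f] at scale [2 * mesh n]. *)
Lemma unity_approx (f : X -> R) : continuous f -> forall e, 0 < e ->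
  exists n0, forall n, (n0 <= n)%N -> forall x,
    `|f x - \sum_(j < size (net n)) f (node n j) * unity n j x| <= e.
Proof.
move=> f_cont e e_gt0.
have [rho rho_gt0 f_unif] := uniform_continuous f_cont e_gt0.
have [n0 mesh_lt] := exists_mesh_lt (divr_gt0 rho_gt0 (ltr0Sn R 1)).
exists n0 => n le_n0n x.
have -> : f x - \sum_(j < size (net n)) f (node n j) * unity n j x
          = \sum_(j < size (net n)) (f x - f (node n j)) * unity n j x.
  rewrite -[in LHS](mulr1 (f x)) -(sum_unity n x) mulr_sumr -sumrB.
  by apply: eq_bigr => j _; rewrite mulrBl.
apply: le_trans (ler_norm_sum _ _ _) _.
rewrite -[leRHS]mulr1 -(sum_unity n x) mulr_sumr; apply: ler_sum => j _.
rewrite normrM (ger0_norm (unity_ge0 j x)).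
have [->|unity_neq0] := eqVneq (unity n j x) 0; first by rewrite !mulr0.
have unity_gt0 : 0 < unity n j x by rewrite lt_def unity_neq0 unity_ge0.
rewrite ler_wpM2r ?unity_ge0 // distrC ltW // f_unif //.
apply: lt_le_trans (unity_gt0_near unity_gt0) _.
by have := mesh_le R le_n0n; lra.
Qed.

Lemma Rintegral_dist_le (P Q : prob) (f : X -> R) n (e B delta : R) :
  continuous f -> (forall x, `|f x| <= B) ->
  (forall x, `|f x - \sum_(j < size (net n)) f (node n j) * unity n j x| <= e) ->
  (forall j, `|\int[P]_x unity n j x - \int[Q]_x unity n j x| <= delta) ->
  `|\int[P]_x f x - \int[Q]_x f x|
    <= e + e + (size (net n))%:R * (B * delta).
Proof.
move=> f_cont f_le f_approx unity_close.
pose g x := \sum_(j < size (net n)) f (node n j) * unity n j x.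
have g_cont : continuous g.
  by apply: continuous_sum => j; exact/continuousMl/continuous_unity.
have fg_cont : continuous (fun x => f x - g x).
  by move=> x; apply: cvgB; [exact: f_cont | exact: g_cont].
have intB (S : prob) : \int[S]_x f x = \int[S]_x (f x - g x) + \int[S]_x g x.
  rewrite RintegralB ?subrK //; exact: continuous_integrable.
have g_close : `|\int[P]_x g x - \int[Q]_x g x| <= (size (net n))%:R * (B * delta).
  rewrite !Rintegral_sum; try exact: continuous_unity.
  rewrite -sumrB; apply: le_trans (ler_norm_sum _ _ _) _.
  rewrite -[X in X%:R * _]card_ord -sum1_card natr_sum mulr_suml.
  apply: ler_sum => j _; rewrite -mulrBr normrM mul1r.
  by apply: ler_pM => //; exact: f_le.
have fg_small (S : prob) : `|\int[S]_x (f x - g x)| <= e.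
  exact: normr_Rintegral_le.
rewrite (intB P) (intB Q) opprD addrACA; apply: le_trans (ler_normD _ _) _.
have := ler_normB (\int[P]_x (f x - g x)) (\int[Q]_x (f x - g x)).
by have := fg_small P; have := fg_small Q; lra.
Qed.

Definition tol (n : nat) : R := mesh n / ((size (net n))%:R + 1).

Lemma tol_gt0 n : 0 < tol n.
Proof. by rewrite divr_gt0 ?mesh_gt0 ?ltr_wpDl. Qed.

Lemma size_net_tol_le n : (size (net n))%:R * tol n <= mesh n.
Proof.
rewrite /tol mulrCA ger_pMr ?mesh_gt0 // ler_pdivrMr ?ltr_wpDl //.
by rewrite mul1r lerDl.
Qed.

Lemma Rintegral_close_of_unity_close (f : X -> R) : continuous f ->
  forall eta, 0 < eta -> exists n0, forall n, (n0 <= n)%N -> forall P Q : prob,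
    (forall j, `|\int[P]_x unity n j x - \int[Q]_x unity n j x| <= 2 * tol n) ->
    `|\int[P]_x f x - \int[Q]_x f x| <= eta.
Proof.
move=> f_cont eta eta_gt0.
have [B f_le] := continuous_bounded f_cont.
have B_ge0 : 0 <= B by apply: le_trans (f_le point).
have eta4_gt0 : 0 < eta / 4 by rewrite divr_gt0.
have [n0 f_approx] := unity_approx f_cont eta4_gt0.
have [n1 mesh_lt] := exists_mesh_lt (divr_gt0 eta4_gt0 (ltr_wpDl B_ge0 ltr01)).
exists (maxn n0 n1) => n; rewrite geq_max => /andP[le_n0n le_n1n] P Q unity_close.
apply: le_trans (Rintegral_dist_le f_cont f_le (f_approx n le_n0n) unity_close) _.
have : B * mesh n < eta / 4.
  apply: le_lt_trans (_ : B * mesh n <= (B + 1) * mesh n1) _.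
    by apply: ler_pM => //; [exact/ltW/mesh_gt0 | rewrite lerDl | exact: mesh_le].
  by rewrite mulrC -ltr_pdivlMr ?ltr_wpDl.
have := size_net_tol_le n; have := tol_gt0 n; have := mesh_gt0 R n.
move: (size (net n))%:R (tol n) (mesh n) => s t m t_gt0 m_gt0 st_le Bm_lt.
have : B * (s * t) <= B * m by rewrite ler_wpM2l.
by nra.
Qed.

Lemma weak_star_cvg0P (mus : R -> prob) (mu : prob) :
  weak_star_cvg0 mus mu <-> forall f, continuous f ->
    (fun e => \int[mus e]_x f x) @ 0^'+ --> \int[mu]_x f x.
Proof.
have intE f : continuous f ->
    (fun e => \int[mus e]_x (f x)%:E)%E = (fun e => (\int[mus e]_x f x)%:E).
  by move=> f_cont; apply/funext => e; exact: integral_continuousE.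
split=> mus_cvg f f_cont; have := mus_cvg f f_cont;
  rewrite (intE f f_cont) integral_continuousE //.
- by case/fine_cvgP.
- by move=> cvg_f; apply/fine_cvgP; split=> //; exact: nearW.
Qed.

Lemma weak_star_cvg0_unity_close (mus : R -> prob) (nu : prob) :
  weak_star_cvg0 mus nu -> forall n, exists2 b, 0 < b & forall e, 0 < e < b ->
    forall j, `|\int[mus e]_x unity n j x - \int[nu]_x unity n j x| <= tol n.
Proof.
move=> /weak_star_cvg0P mus_cvg n.
suff /nbhs_ballP[b b_gt0 b_close] : \forall e \near 0^'+, forall j,
    `|\int[mus e]_x unity n j x - \int[nu]_x unity n j x| <= tol n.
  exists b => // e /andP[e_gt0 e_lt]; apply: b_close => //.
  by rewrite /ball /= sub0r normrN gtr0_norm.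
apply: filter_forall => j.
have /cvgrPdist_le/(_ _ (tol_gt0 n)) := mus_cvg _ (@continuous_unity n j).
by apply: filterS => e; rewrite distrC.
Qed.

Lemma weak_star_cvg0_paste (mu : prob) (nu : nat -> prob) (m : nat -> R -> prob)
    (eps : nat -> R) : decreasing_to0 eps ->
  (forall n j, `|\int[nu n]_x unity n j x - \int[mu]_x unity n j x| <= tol n) ->
  (forall n e, 0 < e <= eps n -> forall j,
     `|\int[m n e]_x unity n j x - \int[nu n]_x unity n j x| <= tol n) ->
  weak_star_cvg0 (paste eps m) mu.
Proof.
move=> eps_to0 nu_close m_close; apply/weak_star_cvg0P => f f_cont.
apply/cvgrPdist_le => eta eta_gt0.
have [n0 f_close] := Rintegral_close_of_unity_close f_cont eta_gt0.
have [eps_gt0 _ _] := eps_to0.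
near=> e.
have e_gt0 : 0 < e by near: e; exact: nbhs_right_gt.
have e_le : e <= eps n0 by near: e; exact: nbhs_right_le (eps_gt0 n0).
set k := stage eps e.
have e_le_k : e <= eps k.
  have e_le0 : e <= eps 0%N := le_trans e_le (le_decreasing_to0 eps_to0 (leq0n n0)).
  by have /andP[] := stage_spec eps_to0 (introT andP (conj e_gt0 e_le0)).
rewrite distrC; apply: (f_close k).
  exact: (stage_ge eps_to0 (introT andP (conj e_gt0 e_le))).
move=> j; apply: le_trans (ler_distD (\int[nu k]_x unity k j x) _ _) _.
have := nu_close k j; have := m_close k e (introT andP (conj e_gt0 e_le_k)) j.
lra.
Unshelve. all: by end_near.
Qed.

Lemma weak_star_usc_sup (G : groupType) (act : G -> X -> X)
    (L : (R -> prob) -> \bar R) : pastable L ->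
  weak_star_usc act (fun mu => ereal_sup [set L mus | mus in MG act mu]).
Proof.
move=> L_pastable mu mu_inv c Phi_lt; apply: contrapT => no_nbhd.
set Phi := fun mu => ereal_sup [set L mus | mus in MG act mu] in Phi_lt no_nbhd.
have [r [Phi_lt_r r_lt_c]] := lte_EFin_between Phi_lt.
have bad_near n : exists nu, [/\ Defs.invariant act nu,
    forall j, `|\int[nu]_x unity n j x - \int[mu]_x unity n j x| <= tol n &
    (c <= Phi nu)%E].
  apply: contrapT => no_bad; apply: no_nbhd.
  exists (size (net n)), (unity n), (tol n); split; first exact: continuous_unity.
  split=> [|nu nu_inv nu_close]; first exact: tol_gt0.
  rewrite ltNge; apply/negP => c_le; apply: no_bad; exists nu; split => // j.
  by apply/ltW; rewrite -lte_fin -integral_distE //; exact: continuous_unity.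
have /choice[nu nuP] := bad_near.
have /choice[m mP] : forall n, exists mus, MG act (nu n) mus /\ (r%:E < L mus)%E.
  move=> n; have [_ _ c_le] := nuP n.
  have [_ [mus mus_MG <-] r_lt] := ereal_sup_gt (lt_le_trans r_lt_c c_le).
  by exists mus.
have /choice[b bP] : forall n, exists b, 0 < b /\ forall e, 0 < e < b ->
    forall j, `|\int[m n e]_x unity n j x - \int[nu n]_x unity n j x| <= tol n.
  move=> n.
  have [b b_gt0 b_close] := weak_star_cvg0_unity_close (proj2 (proj1 (mP n))) n.
  by exists b.
have [eps [eps_to0 eps_lt_b r_le]] :=
  L_pastable r m (fun n => proj2 (mP n)) b (fun n => proj1 (bP n)).
have paste_MG : MG act mu (paste eps m).
  split=> [e e_gt0|]; first exact: (proj1 (proj1 (mP _))).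
  apply: weak_star_cvg0_paste eps_to0 _ _ => [n j|n e /andP[e_gt0 e_le] j].
    by have [_ ] := nuP n.
  by apply: (proj2 (bP n)); rewrite e_gt0 (le_lt_trans e_le (eps_lt_b n)).
have L_le : (L (paste eps m) <= Phi mu)%E.
  by apply: ereal_sup_ubound; exists (paste eps m).
by have := le_trans r_le L_le; rewrite leNgt Phi_lt_r.
Qed.

End CompactMetricSpace.

Theorem proposition3p26 (R : realType) (G : groupType) (X : ptopologicalType)
    (d : X -> X -> R) (act : G -> X -> X) (F : nat -> seq G) :
  countable [set: G] -> infinite_set [set: G] ->
  G_system d act ->
  Folner R F -> tempered R F ->
  weak_star_usc act (upper_mdim d act F) /\
  weak_star_usc act (lower_mdim d act F).
Proof.
move=> _ _ [X_compact d_metric _ _ _] _ _.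
split; apply: (weak_star_usc_sup d_metric X_compact).
- exact: (@pastable_limsup0 R _ (fun P => mdim_ratio d act F (fun=> P))).
- exact: (@pastable_liminf0 R _ (fun P => mdim_ratio d act F (fun=> P))).
Qed.
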